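(* Let $\eta,\tau>0$ and $\nu\in\mathbb{R}$. For $\mu\in\mathbb{R}$ let $p_\mu(z)=\tau+(2\eta+2\mu-\tau)z+(2\eta-2\mu-\tau)z^2+\tau z^3$. Suppose $p_{\nu}$ has a root $\Omega_+$ in the open upper half-plane $\{\Im z>0\}$. Then $p_{-\nu}$ has exactly one root $\Omega_-$ in the open upper half-plane, and $\overline{\Omega_+}\,\Omega_-=1$.
   Context: $p_\mu$ is the numerator of $\partial_z G(\mu,\eta,\tau,z)=p_\mu(z)/(2z^2(z-1))$ for $G(\mu,\eta,\tau,z)=\tau\frac{z+z^{-1}}{2}+\eta\log\big(\frac{z+z^{-1}}{2}-1\big)-\mu\log z$; in the paper $\Omega(\mu,\eta,\tau)$ denotes the root of $p_\mu$ in the upper half-plane, and $\Omega_\pm=\Omega(\pm\nu,\eta,\tau)$. *)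

From mathcomp Require Import all_boot all_order all_algebra.
From mathcomp Require Import complex.
Set Implicit Arguments. Unset Strict Implicit. Unset Printing Implicit Defensive.
Import Order.TTheory GRing.Theory Num.Theory.
Local Open Scope ring_scope.
Local Open Scope complex_scope.

Definition pmu (R : rcfType) (eta tau mu : R) : {poly R[i]} :=
  (tau%:C)%:P
  + ((2 * eta + 2 * mu - tau)%:C)%:P * 'X
  + ((2 * eta - 2 * mu - tau)%:C)%:P * 'X ^+ 2
  + (tau%:C)%:P * 'X ^+ 3.

(* Since p_mu has real coefficients, its roots are stable under conjugation,
   and since the coefficients of p_mu read backwards are those of p_(-mu),
   z |-> 1/z maps roots of p_mu to roots of p_(-mu).  Hence 1/conj(Omega_+)
   is a root of p_(-nu), and it lies in the upper half-plane.  A second root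
   w there would give, with the two conjugates in the lower half-plane, four
   distinct roots of a nonzero cubic. *)
From mathcomp Require Import all_boot all_order all_algebra.
From mathcomp Require Import complex.
From mathcomp Require Import ring lra.
Set Implicit Arguments. Unset Strict Implicit. Unset Printing Implicit Defensive.
Import Order.TTheory GRing.Theory Num.Theory.
Local Open Scope ring_scope.
Local Open Scope complex_scope.

Section ComplexRoots.
Variable R : rcfType.
Implicit Types (x w z : R[i]) (p : {poly R[i]}).

Lemma Im_conjc x : complex.Im x^* = - complex.Im x.
Proof. by case: x. Qed.

Lemma Im_conjc_inv_gt0 x : 0 < complex.Im x -> 0 < complex.Im (x^*)^-1.
Proof.
case: x => a b /= b_gt0; rewrite mulNr opprK sqrrN.
by apply: divr_gt0 => //; rewrite ltr_pwDr ?exprn_gt0 ?sqr_ge0.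
Qed.

Lemma map_conjc_polyC (a : R) : map_poly conjc a%:C%:P = a%:C%:P.
Proof. by rewrite map_polyC; congr _%:P; apply: conjc_real. Qed.

Lemma Im_lt_neq x z : complex.Im x < complex.Im z -> x != z.
Proof. by apply: contraTneq => ->; rewrite ltxx. Qed.

Lemma upper_root_unique p w z :
  p != 0 -> (size p <= 4)%N -> map_poly conjc p = p ->
  root p w -> root p z -> 0 < complex.Im w -> 0 < complex.Im z -> w = z.
Proof.
move=> p_neq0 size_p p_real pw pz Imw Imz; apply/eqP/contraT => w_neq_z.
have root_conj x : root p x -> root p x^*.
  by rewrite -complex_root_conj p_real.
have roots4 : all (root p) [:: w; z; w^*; z^*] by rewrite /= pw pz !root_conj.
have uniq4 : uniq [:: w; z; w^*; z^*].
  have Im_ne x y : 0 < complex.Im x -> 0 < complex.Im y -> y^* != x.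
    by move=> Imx Imy; apply: Im_lt_neq; rewrite Im_conjc; lra.
  rewrite /= !inE !negb_or w_neq_z (inj_eq (can_inj (@conjcK R))) w_neq_z.
  by rewrite ![_ == w^*]eq_sym ![_ == z^*]eq_sym !Im_ne.
by have := max_poly_roots p_neq0 roots4 uniq4; rewrite ltnNge size_p.
Qed.

End ComplexRoots.

Section Pmu.
Variables (R : rcfType) (eta tau : R).
Hypothesis tau_gt0 : 0 < tau.

Lemma horner_pmu mu z : (pmu eta tau mu).[z] =
  tau%:C + (2 * eta + 2 * mu - tau)%:C * z
  + (2 * eta - 2 * mu - tau)%:C * z ^+ 2 + tau%:C * z ^+ 3.
Proof. by rewrite /pmu !hornerE. Qed.

Lemma pmu_at0 mu : (pmu eta tau mu).[0] = tau%:C.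
Proof. by rewrite horner_pmu !(expr0n, mulr0, addr0). Qed.

Lemma pmu_neq0 mu : pmu eta tau mu != 0.
Proof.
apply: contra_neq (lt0r_neq0 tau_gt0) => pmu0.
by have := congr1 (@complex.Re R) (pmu_at0 mu); rewrite pmu0 horner0.
Qed.

Lemma size_pmu mu : (size (pmu eta tau mu) <= 4)%N.
Proof.
have -> : pmu eta tau mu = Poly [:: tau%:C; (2 * eta + 2 * mu - tau)%:C;
                                     (2 * eta - 2 * mu - tau)%:C; tau%:C].
  by rewrite /pmu /= !cons_poly_def mul0r add0r; ring.
exact: size_Poly.
Qed.

Lemma pmu_conjc mu : map_poly conjc (pmu eta tau mu) = pmu eta tau mu.
Proof.
by rewrite /pmu !(rmorphD, rmorphM, rmorphXn) /= !map_conjc_polyC map_polyX.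
Qed.

Lemma pmu_reciprocal mu z : z != 0 ->
  (pmu eta tau (- mu)).[z^-1] * z ^+ 3 = (pmu eta tau mu).[z].
Proof.
move=> z_neq0; rewrite !horner_pmu.
have -> : 2 * eta + 2 * - mu - tau = 2 * eta - 2 * mu - tau by ring.
have -> : 2 * eta - 2 * - mu - tau = 2 * eta + 2 * mu - tau by ring.
by field.
Qed.

Lemma root_pmu_inv mu z :
  root (pmu eta tau mu) z -> root (pmu eta tau (- mu)) z^-1.
Proof.
have [-> | z_neq0] := eqVneq z 0.
  by rewrite /root pmu_at0 => /eqP[tau0]; move: tau_gt0; rewrite tau0 ltxx.
by rewrite /root -(pmu_reciprocal mu z_neq0) mulf_eq0 expf_eq0 (negbTE z_neq0)
  andbF orbF.
Qed.

End Pmu.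

Theorem lemma3p3 (R : rcfType) (eta tau nu : R)
  (heta : 0 < eta) (htau : 0 < tau)
  (Wp : R[i]) (hWp : root (pmu eta tau nu) Wp) (hImWp : 0 < complex.Im Wp) :
  exists Wm : R[i],
    [/\ root (pmu eta tau (- nu)) Wm, 0 < complex.Im Wm,
        (forall w : R[i], root (pmu eta tau (- nu)) w -> 0 < complex.Im w -> w = Wm)
      & (Wp^* * Wm = 1)].
Proof.
have Wm_root : root (pmu eta tau (- nu)) (Wp^*)^-1.
  by apply: (root_pmu_inv htau); rewrite -complex_root_conj pmu_conjc.
have Im_Wm := Im_conjc_inv_gt0 hImWp.
exists (Wp^*)^-1; split=> //.
- move=> w w_root Im_w.
  exact: (upper_root_unique (pmu_neq0 eta htau (- nu)) (size_pmu eta tau (- nu))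
           (pmu_conjc eta tau (- nu)) w_root Wm_root Im_w Im_Wm).
- by rewrite mulfV // Im_lt_neq // Im_conjc /=; lra.
Qed.
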